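(* For every positive integer $d$, the hypercube $Q_d$ satisfies $\chi_{\mathrm{so}}(Q_d)=2$ if $d$ is odd and $\chi_{\mathrm{so}}(Q_d)=4$ if $d$ is even.
   Context: $Q_d$ has vertex set $\{0,1\}^d$, two vertices adjacent iff they differ in exactly one coordinate. A strong odd coloring of a graph is a proper vertex coloring such that for each vertex $v$ every color appearing on the open neighborhood $N(v)$ occurs an odd number of times on $N(v)$; $\chi_{\mathrm{so}}$ is the minimum number of colors. *)

From mathcomp Require Import all_boot.
Set Implicit Arguments. Unset Strict Implicit. Unset Printing Implicit Defensive.

Definition cube_vertex (d : nat) := {ffun 'I_d -> bool}.

Definition cube_adj (d : nat) : rel (cube_vertex d) :=
  fun u v => #|[set i : 'I_d | u i != v i]| == 1.

Definition nbhd (T : finType) (e : rel T) (v : T) : {set T} := [set u | e v u].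

Definition proper_coloring (T : finType) (e : rel T) (k : nat) (c : T -> 'I_k) : Prop :=
  forall u v, e u v -> c u <> c v.

Definition strong_odd_coloring (T : finType) (e : rel T) (k : nat) (c : T -> 'I_k) : Prop :=
  proper_coloring e c /\
  forall v (a : 'I_k), (exists2 u, u \in nbhd e v & c u = a) ->
    odd #|[set u in nbhd e v | c u == a]|.

Definition strong_odd_colorable (T : finType) (e : rel T) (k : nat) : Prop :=
  exists c : T -> 'I_k, strong_odd_coloring e c.

Definition chi_so_eq (T : finType) (e : rel T) (k : nat) : Prop :=
  strong_odd_colorable e k /\ forall k', k' < k -> ~ strong_odd_colorable e k'.

From mathcomp Require Import all_boot zify.
Set Implicit Arguments. Unset Strict Implicit. Unset Printing Implicit Defensive.

(* Odd d: colour by the parity of the Hamming weight; every neighbourhood is then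
   monochromatic of odd size d.  Even d: colour by that parity together with the
   first coordinate; a neighbourhood then sees one vertex of one colour and d - 1
   of another.
   Conversely let d be even and c use at most 3 colours.  At each vertex v the
   colours present on N(v) have odd multiplicities summing to d, so there is an
   even, nonzero number of them, at most 2: every colour a <> c(v) occurs an odd
   number of times on N(v).  Now fix w and the colour a of one of its neighbours,
   and count the paths w - u - x with c(x) = a.  Paths to x <> w come in pairs
   (flip coordinates i, j in either order) and there is none back to x = w, so
   the count is even.  Grouped by u, each u with c(u) <> a contributes an odd
   number and each u with c(u) = a none, so the count is congruent to
   d - #{u in N(w) | c(u) = a}, which is odd. *)

Lemma odd_sum_congr (I : Type) (r : seq I) (P : pred I) (F G : I -> nat) :
  (forall i, P i -> odd (F i) = odd (G i)) ->
  odd (\sum_(i <- r | P i) F i) = odd (\sum_(i <- r | P i) G i).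
Proof.
move=> FG; apply: (big_ind2 (fun m n => odd m = odd n)) => // m1 m2 n1 n2 e1 e2.
by rewrite !oddD e1 e2.
Qed.

Lemma sum_symmetric_even (T : finType) (g : T -> T -> nat) :
  (forall i j, g i j = g j i) -> (forall i, g i i = 0) ->
  ~~ odd (\sum_i \sum_j g i j).
Proof.
move=> gC g0; pose h i j := if enum_rank i < enum_rank j then g i j else 0.
suff -> : \sum_i \sum_j g i j = (\sum_i \sum_j h i j).*2 by rewrite odd_double.
rewrite -addnn [X in _ = _ + X]exchange_big -big_split; apply: eq_bigr => i _.
rewrite -big_split; apply: eq_bigr => j _; rewrite /h /=.
by case: ltngtP => [_|_|/val_inj/enum_rank_inj ->]; rewrite ?addn0 ?g0 // gC.
Qed.

Section ColorDegree.
Variables (T : finType) (e : rel T) (k : nat) (c : T -> 'I_k).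

Definition color_degree (v : T) (a : 'I_k) := #|[set u in nbhd e v | c u == a]|.

Lemma proper_coloring_gt1 u v : e u v -> proper_coloring e c -> 1 < k.
Proof.
move=> euv /(_ u v euv) cuv; case: k c cuv => [|[|//]] c' cuv; first by case: (c' u).
by case: cuv; apply: val_inj; rewrite /= !ord1.
Qed.

Lemma color_degree_self v : proper_coloring e c -> color_degree v (c v) = 0.
Proof.
move=> c_proper; apply/eqP; rewrite cards_eq0; apply/eqP/setP => u.
by rewrite !inE; apply/andP => -[evu /eqP/esym]; apply: c_proper.
Qed.

Lemma sum_color_degree v : \sum_a color_degree v a = #|nbhd e v|.
Proof.
rewrite -sum1_card (partition_big c predT) //; apply: eq_bigr => a _.
by rewrite /color_degree -sum1dep_card; apply: eq_bigl => u; rewrite !inE.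
Qed.

Hypothesis c_strong : strong_odd_coloring e c.

Lemma color_degree_odd v a : 0 < color_degree v a -> odd (color_degree v a).
Proof.
move=> /card_gt0P [u]; rewrite inE => /andP [u_nb /eqP cua].
by apply: c_strong.2; exists u.
Qed.

Lemma odd_card_nbhd_colors v :
  odd #|[set a | 0 < color_degree v a]| = odd #|nbhd e v|.
Proof.
rewrite -sum_color_degree (bigID (fun a => 0 < color_degree v a)) /=.
rewrite [X in _ + X]big1 => [|a]; last by rewrite lt0n negbK => /eqP.
by rewrite addn0 -sum1dep_card; apply: odd_sum_congr => a /color_degree_odd ->.
Qed.

Lemma odd_color_degree v a :
    k <= 3 -> ~~ odd #|nbhd e v| -> 0 < #|nbhd e v| -> a != c v ->
  odd (color_degree v a).
Proof.
move=> k_le3 deg_even /card_gt0P [u u_nb] a_neq.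
set P := [set b | 0 < color_degree v b].
have P_gt0 : 0 < #|P|.
  apply/card_gt0P; exists (c u); rewrite inE; apply/card_gt0P.
  by exists u; rewrite inE u_nb eqxx.
suff : a \in P by rewrite inE => /color_degree_odd.
apply: contraT => aNP.
have P_sub : P \subset ~: [set c v; a].
  apply/subsetP => b; rewrite !inE; apply: contraTN => /orP [] /eqP ->.
    by rewrite (color_degree_self v c_strong.1).
  by rewrite inE in aNP.
have P_le1 : #|P| <= 1.
  have := cardsC [set c v; a]; rewrite cards2 eq_sym a_neq card_ord.
  have := subset_leq_card P_sub; lia.
have P1 : #|P| = 1 by apply/eqP; rewrite eqn_leq P_le1 P_gt0.
by move: deg_even; rewrite -odd_card_nbhd_colors P1.
Qed.

End ColorDegree.

Section Hypercube.
Variable d : nat.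
Implicit Types (u v w : cube_vertex d) (i j : 'I_d).

Definition flip v i : cube_vertex d :=
  [ffun j => if j == i then ~~ v j else v j].

Lemma flipK v i : flip (flip v i) i = v.
Proof. by apply/ffunP => j; rewrite !ffunE; case: eqP; rewrite ?negbK. Qed.

Lemma flipC v i j : flip (flip v i) j = flip (flip v j) i.
Proof. by apply/ffunP => l; rewrite !ffunE; case: (l == i); case: (l == j). Qed.

Lemma flip_inj v : injective (flip v).
Proof.
move=> i j /ffunP /(_ i); rewrite !ffunE eqxx.
by case: eqP => // _; case: (v i).
Qed.

Lemma flip_neq v i j : (flip v i j != v j) = (j == i).
Proof. by rewrite ffunE; case: (j == i); case: (v j). Qed.

Lemma cube_adj_flip v i : cube_adj v (flip v i).
Proof.
rewrite /cube_adj (_ : [set j | v j != _] = [set i]) ?cards1 //.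
by apply/setP => j; rewrite !inE eq_sym flip_neq.
Qed.

Lemma cube_adjP u v : cube_adj u v -> exists i, v = flip u i.
Proof.
move=> /cards1P [i /setP uv_i]; exists i; apply/ffunP => j.
have := uv_i j; rewrite !inE ffunE.
by case: (j == i); case: (u j); case: (v j).
Qed.

Lemma cube_nbhd v : nbhd (@cube_adj d) v = flip v @: 'I_d.
Proof.
apply/setP => u; rewrite inE; apply/idP/imsetP => [/cube_adjP [i ->]|[i _ ->]].
  by exists i.
exact: cube_adj_flip.
Qed.

Lemma card_cube_nbhd v : #|nbhd (@cube_adj d) v| = d.
Proof. by rewrite cube_nbhd card_imset ?card_ord //; apply: flip_inj. Qed.

Lemma cube_color_degree k (c : cube_vertex d -> 'I_k) v a :
  color_degree (@cube_adj d) c v a = \sum_i (c (flip v i) == a).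
Proof.
rewrite /color_degree cube_nbhd.
rewrite (_ : [set u in _ | _] = flip v @: [set i | c (flip v i) == a]).
  rewrite card_imset; last exact: flip_inj.
  by rewrite -sum1dep_card big_mkcond; apply: eq_bigr => i _; case: eqP.
apply/setP => u; rewrite inE; apply/andP/imsetP => [[/imsetP [i _ ->] ca]|].
  by exists i; rewrite ?inE.
by case=> i; rewrite inE => ca ->; rewrite imset_f.
Qed.

Lemma cube_strong_odd_coloring k (c : cube_vertex d -> 'I_k) :
    (forall v i, c (flip v i) != c v) ->
    (forall v i, odd (\sum_j (c (flip v j) == c (flip v i)))) ->
  strong_odd_coloring (@cube_adj d) c.
Proof.
move=> c_flip c_odd; split=> [u v /cube_adjP [i ->]|v a [u]].
  by apply/eqP; rewrite eq_sym.
by rewrite inE => /cube_adjP [i ->] <-; rewrite -/(color_degree _ _ _ _) cube_color_degree.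
Qed.

Definition cube_weight v := \sum_i v i.

Lemma odd_weight_flip v i : odd (cube_weight (flip v i)) = ~~ odd (cube_weight v).
Proof.
rewrite /cube_weight (bigD1 i) //= [in RHS](bigD1 i) //= ffunE eqxx.
rewrite (eq_bigr (fun j => v j : nat)) => [|j /negbTE ji]; last by rewrite ffunE ji.
by rewrite !oddD; case: (v i); rewrite /= ?negbK.
Qed.

End Hypercube.

Lemma cube_odd_colorable d : odd d -> strong_odd_colorable (@cube_adj d) 2.
Proof.
move=> d_odd; pose c (v : cube_vertex d) : 'I_2 := inord (odd (cube_weight v)).
have c_flip v i : c (flip v i) = inord (~~ odd (cube_weight v)).
  by rewrite /c odd_weight_flip.
exists c; apply: cube_strong_odd_coloring => v i.
  by rewrite c_flip -val_eqE /= !inordK ?leq_b1 //; case: odd.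
rewrite (eq_bigr (fun=> 1)) => [|j _]; last by rewrite !c_flip eqxx.
by rewrite sum1_card card_ord.
Qed.

Lemma cube_even_colorable d : ~~ odd d -> 0 < d -> strong_odd_colorable (@cube_adj d) 4.
Proof.
case: d => // d; rewrite /= negbK => d_odd _.
pose col (b1 b2 : bool) : 'I_4 := inord (b1.*2 + b2).
have col_eq b1 b2 b1' b2' : (col b1 b2 == col b1' b2') = (b1 == b1') && (b2 == b2').
  by rewrite -val_eqE /= !inordK; case: b1 b2 b1' b2' => [] [] [] [].
pose c (v : cube_vertex d.+1) := col (odd (cube_weight v)) (v ord0).
have c_flip v i :
    c (flip v i) = col (~~ odd (cube_weight v)) (if i == ord0 then ~~ v ord0 else v ord0).
  by rewrite /c odd_weight_flip ffunE [ord0 == _]eq_sym.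
exists c; apply: cube_strong_odd_coloring => v i.
  by rewrite c_flip col_eq; case: odd.
rewrite big_ord_recl; under eq_bigr do rewrite c_flip.
rewrite /= sum_nat_const card_ord !c_flip !col_eq eqxx /=.
by case: (i == ord0); case: (v ord0); rewrite /= ?muln0 ?muln1.
Qed.

Lemma cube_even_not_colorable d k :
  ~~ odd d -> 0 < d -> k <= 3 -> ~ strong_odd_colorable (@cube_adj d) k.
Proof.
move=> d_even d_gt0 k_le3 [c c_strong]; have c_proper := c_strong.1.
pose w : cube_vertex d := [ffun=> false]; pose a := c (flip w (Ordinal d_gt0)).
have a_neq : a != c w.
  by apply/eqP => /esym; apply: c_proper; apply: cube_adj_flip.
have odd_deg v b : b != c v -> odd (color_degree (@cube_adj d) c v b).
  by apply: odd_color_degree; rewrite ?card_cube_nbhd.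
pose N u := color_degree (@cube_adj d) c u a.
have paths_even : ~~ odd (\sum_i N (flip w i)).
  under eq_bigr do rewrite /N cube_color_degree.
  apply: sum_symmetric_even => [i j|i]; first by rewrite flipC.
  by rewrite flipK eq_sym (negbTE a_neq).
have paths_parity : odd (\sum_i N (flip w i)) = odd (\sum_i (c (flip w i) != a)).
  apply: odd_sum_congr => i _; rewrite /N; case: eqVneq => [<-|c_neq].
    by rewrite color_degree_self.
  by rewrite odd_deg // eq_sym.
have deg_split : \sum_i (c (flip w i) != a) + N w = d.
  rewrite /N cube_color_degree -big_split /= (eq_bigr (fun=> 1)) => [|i _].
    by rewrite sum1_card card_ord.
  exact: addn_negb.
have := congr1 odd deg_split; rewrite oddD odd_deg // -paths_parity.
by move: paths_even d_even; case: odd; case: odd.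
Qed.

Theorem proposition13 (d : nat) :
  0 < d ->
  chi_so_eq (@cube_adj d) (if odd d then 2 else 4).
Proof.
move=> d_gt0; case: ifP => d_odd; split.
- exact: cube_odd_colorable.
- move=> k k_lt2 [c [c_proper _]].
  have := proper_coloring_gt1 (cube_adj_flip [ffun=> false] (Ordinal d_gt0)) c_proper.
  by rewrite ltnNge -ltnS k_lt2.
- by apply: cube_even_colorable; rewrite ?d_odd.
- by move=> k k_lt4; apply: cube_even_not_colorable; rewrite ?d_odd.
Qed.
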